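(* Let $r,\delta,n,h$ be positive integers and $\lambda$ an integer with $r\ge 2$, $n\geq (\lambda+1)(h+1)^2$, $\lambda\geq r-1$ and $h\geq\delta$. If $G\in \mathcal{K}_{n,\delta}^{\lambda_r^h}$ (with $\lambda^h_r=\lambda$), then $$n-(r-1)(h+1)-1<\rho(G)< n-(r-1)(h+1).$$
   Context: All graphs are finite and simple; $\rho(G)$ denotes the spectral radius of the adjacency matrix of $G$; $K_m$ is the complete graph on $m$ vertices, $\cup$ denotes disjoint union, $sK_m$ denotes $s$ disjoint copies of $K_m$. For integers $r\ge 2$, $h\ge 0$, the $h$-extra $r$-component edge-connectivity $\lambda^h_r(G)$ of a graph $G$ is the minimum size of an edge subset $F\subseteq E(G)$ such that $G-F$ is disconnected, has at least $r$ connected components, and every component of $G-F$ has at least $h+1$ vertices. $\mathcal{K}_{n,\delta}^{\lambda_r^h}$ denotes the set of graphs $G$ with $h$-extra $r$-component edge-connectivity $\lambda^h_r(G)=\lambda$ and minimum degree $\delta$ that are obtained from $K_{n-(r-1)(h+1)}\cup (r-2)K_{h+1}\cup K_h\cup K_1$ as follows: add $t$ edges between the vertex of $K_1$ and vertices of $K_h$, for some $1\leq t\leq \delta$; add $r-1$ edges joining a vertex of $K_{n-(r-1)(h+1)}$ to one vertex in each copy of $K_{h+1}$ and to one vertex of $K_h$; and then add $\lambda-r+1-\delta+t$ further edges between $K_{n-(r-1)(h+1)}$ and $(r-2)K_{h+1}\cup K_h\cup K_1$. *)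

From HB Require Import structures.
From mathcomp Require Import all_boot all_order all_algebra.
From mathcomp Require Import polyrcf.
From mathcomp Require Import reals.
Set Implicit Arguments. Unset Strict Implicit. Unset Printing Implicit Defensive.
Import Order.TTheory GRing.Theory Num.Theory.

Definition simple_graph n (e : rel 'I_n) : Prop :=
  (forall x, ~~ e x x) /\ (forall x y, e x y = e y x).

Definition edges n (e : rel 'I_n) : {set {set 'I_n}} :=
  [set E : {set 'I_n} | [exists x, exists y, e x y && (E == [set x; y])]].

Definition del_edges n (e : rel 'I_n) (F : {set {set 'I_n}}) : rel 'I_n :=
  fun x y => e x y && ([set x; y] \notin F).

Definition components n (e : rel 'I_n) : {set {set 'I_n}} :=
  [set [set y | connect e x y] | x : 'I_n].

Definition extra_comp_cut n (e : rel 'I_n) (r h : nat) (F : {set {set 'I_n}}) :=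
  [/\ F \subset edges e,
      1 < #|components (del_edges e F)|,
      r <= #|components (del_edges e F)|
    & forall C, C \in components (del_edges e F) -> h.+1 <= #|C|].

Definition extra_comp_edge_conn_eq n (e : rel 'I_n) (r h lam : nat) : Prop :=
  (exists F, extra_comp_cut e r h F /\ #|F| = lam) /\
  (forall F, extra_comp_cut e r h F -> lam <= #|F|).

Definition deg n (e : rel 'I_n) (x : 'I_n) : nat := #|[set y | e x y]|.

Definition min_degree_eq n (e : rel 'I_n) (d : nat) : Prop :=
  (exists x, deg e x = d) /\ (forall x, d <= deg e x).

Definition adj_mx (R : realType) n (e : rel 'I_n) : 'M[R]_n :=
  (\matrix_(i, j) (e i j)%:R)%R.

(* For a real symmetric matrix (such as
   an adjacency matrix) all eigenvalues are real, so this is rho(G). *)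
Definition spec_rad (R : realType) n (e : rel 'I_n) : R :=
  (\big[Num.max/0]_(x <- rootsR (char_poly (adj_mx R e))) `|x|)%R.

(* Vertex labelling p : 'I_n -> nat:
     p x = 0         : the big clique K_{n-(r-1)(h+1)}
     p x = i, 1<=i<=r-2 : the i-th copy of K_{h+1}
     p x = r-1       : the K_h
     p x = r         : the K_1 (vertex v). *)
Definition in_family_K n (delta r h lam : nat) (e : rel 'I_n) : Prop :=
  simple_graph e /\
  extra_comp_edge_conn_eq e r h lam /\
  min_degree_eq e delta /\
  exists (p : 'I_n -> nat) (a v : 'I_n) (t : nat),
    [/\ (forall x, p x <= r),
        #|[set x | p x == 0]| = n - (r - 1) * (h + 1),
        (forall i, 1 <= i <= r - 2 -> #|[set x | p x == i]| = h + 1),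
        #|[set x | p x == r - 1]| = h &
        [set x | p x == r] = [set v] /\
      [/\
          (forall x y, x != y -> p x = p y -> e x y),
          (forall x y, e x y -> 0 < p x -> 0 < p y -> p x != p y ->
                (p x == r - 1) && (p y == r) || (p x == r) && (p y == r - 1)),
          1 <= t <= delta /\ #|[set y | e v y & p y == r - 1]| = t,
          p a = 0 /\ (forall i, 1 <= i <= r - 1 -> exists y, p y = i /\ e a y) &
          (* r-1 + (lam - r + 1 - delta + t) edges in total between the big
             clique and the rest (the lam-r+1-delta+t further edges are
             distinct from the r-1 edges at a, so their number is >= 0) *)
          #|[set E in edges e | [exists x in E, p x == 0] &&
                                [exists y in E, p y != 0]]| + delta
            = lam + t ] ].

From HB Require Import structures.
From mathcomp Require Import all_boot all_order all_algebra.
From mathcomp Require Import polyrcf.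
From mathcomp Require Import reals.
From mathcomp Require Import zify complex sesquilinear spectral.

(* Write N = n - (r-1)(h+1) and B for the vertex set of the big clique K_N.
   Lower bound: B is a clique with a neighbour y outside it, so the Rayleigh
   quotient of the test vector N 1_B + 1_y exceeds N - 1.  Upper bound: at most
   lambda edges leave B and every vertex outside B has at most h neighbours
   outside B; hence the positive weight w equal to 2 lambda N on B and to
   N + 2 lambda deg_B(i) outside B satisfies w A < N w entrywise, and the
   Collatz-Wielandt argument bounds every eigenvalue of A by N in modulus. *)

Set Implicit Arguments.
Unset Strict Implicit.
Unset Printing Implicit Defensive.

Import Order.TTheory GRing.Theory Num.Theory.

Local Open Scope ring_scope.

Lemma norm_eigenvalue_lt (R : realFieldType) n (A : 'M[R]_n) (w : 'rV[R]_n) (c t : R) :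
  (forall i j, 0 <= A i j) -> (forall j, 0 < w 0 j) ->
  (forall j, (w *m A) 0 j < c * w 0 j) -> eigenvalue A t -> `|t| < c.
Proof.
move=> A_ge0 w_gt0 wA_lt /eigenvalueP [v vA v_neq0].
have [k vk_neq0] : exists k, v 0 k != 0.
  apply/existsP; apply: contraR v_neq0; rewrite negb_exists => /forallP v0.
  by apply/eqP/rowP => k; rewrite mxE; apply/eqP/negPn/v0.
pose ratio j := `|v 0 j| / w 0 j.
have [j _ ratio_max] := @arg_maxP _ _ _ k predT ratio isT.
have ratio_gt0 : 0 < ratio j.
  by apply: lt_le_trans (ratio_max k isT); rewrite divr_gt0 ?normr_gt0.
have vj_gt0 : 0 < `|v 0 j| by move: ratio_gt0; rewrite pmulr_lgt0 ?invr_gt0.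
have v_le i : `|v 0 i| <= ratio j * w 0 i by rewrite -ler_pdivrMr //; exact: ratio_max.
suff : `|t| * `|v 0 j| < c * `|v 0 j| by rewrite (ltr_pM2r vj_gt0).
have -> : `|t| * `|v 0 j| = `|(v *m A) 0 j| by rewrite vA mxE normrM.
rewrite mxE; apply: le_lt_trans (ler_norm_sum _ _ _) _.
apply: (@le_lt_trans _ _ (ratio j * (w *m A) 0 j)).
  rewrite mxE mulr_sumr; apply: ler_sum => i _.
  by rewrite normrM (ger0_norm (A_ge0 i j)) mulrA ler_wpM2r ?v_le.
have -> : `|v 0 j| = ratio j * w 0 j by rewrite divfK // gt_eqF.
by rewrite mulrCA ltr_pM2l.
Qed.

Section Rayleigh.

Local Open Scope sesquilinear_scope.

Lemma hermitian_rayleigh (C : numClosedFieldType) n (A : 'M[C]_n) (x : 'rV[C]_n) (s : C) :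
  A \is hermsymmx -> s \is Num.real ->
  s * (x *m x^t*) 0 0 < (x *m A *m x^t*) 0 0 ->
  exists2 d, eigenvalue A d & (d \is Num.real) && (s < d).
Proof.
move=> A_herm s_real.
have /orthomx_spectralP A_diag := hermitian_normalmx A_herm.
have P_inv := invmx_unitary (spectral_unitarymx A).
have P_unit := spectral_unit A.
have d_real := hermitian_spectral_diag_real A_herm.
move: A_diag P_inv P_unit d_real.
set P := spectralmx A; set d := spectral_diag A => A_diag P_inv P_unit d_real.
have P_eigen j : row j P *m A = d 0 j *: row j P.
  have PA : P *m A = diag_mx d *m P by rewrite A_diag !mulmxA mulmxV // mul1mx.
  by rewrite -row_mul PA mul_diag_mx; apply/rowP => k; rewrite !mxE.
have P_row_neq0 j : row j P != 0.
  apply/eqP => Pj0; have := congr1 (row j) (mulmxV P_unit).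
  rewrite row_mul Pj0 mul0mx => /rowP/(_ j); rewrite !mxE eqxx /= => /eqP.
  by rewrite eq_sym oner_eq0.
move=> rayleigh_gt.
have [j s_lt_dj] : exists j, s < d 0 j.
  apply/existsP; apply: contraLR rayleigh_gt; rewrite negb_exists => /forallP d_le.
  set z := x *m P^t*.
  have zt : z^t* = P *m x^t* by rewrite /z trmx_mul map_mxM trmxCK.
  have -> : x *m A *m x^t* = z *m diag_mx d *m z^t* by rewrite zt A_diag P_inv /z !mulmxA.
  have -> : x *m x^t* = z *m z^t*.
    by rewrite zt /z mulmxA -(mulmxA x) -P_inv mulVmx // mulmx1.
  apply/negP; rewrite le_gtF // mul_mx_diag !mxE mulr_sumr; apply: ler_sum => k _.
  rewrite !mxE mulrAC [s * _]mulrC; apply: ler_wpM2l; first exact: mul_conjC_ge0.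
  by rewrite real_leNgt ?d_le //; apply: (mxOverP d_real).
exists (d 0 j); last by rewrite s_lt_dj andbT; apply: (mxOverP d_real).
by apply/eigenvalueP; exists (row j P); [apply: P_eigen | apply: P_row_neq0].
Qed.

Lemma sym_rayleigh (R : rcfType) n (A : 'M[R]_n) (x : 'rV[R]_n) (s : R) :
  A^T = A -> s * (x *m x^T) 0 0 < (x *m A *m x^T) 0 0 ->
  exists2 t, eigenvalue A t & s < t.
Proof.
move=> A_sym rayleigh_gt.
pose toC := real_complex R.
have toC_adj m k (M : 'M[R]_(m, k)) : (map_mx toC M)^t* = map_mx toC M^T.
  by apply/matrixP => i j; rewrite !mxE conj_Creal // complex_real.
have A_herm : map_mx toC A \is hermsymmx.
  apply: realsym_hermsym; last by apply/mxOverP => i j; rewrite mxE complex_real.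
  by apply/is_hermitianmxP; rewrite expr0 scale1r map_mx_id // map_trmx A_sym.
have s_real : toC s \is Num.real by rewrite complex_real.
have [d] : exists2 d, eigenvalue (map_mx toC A) d & (d \is Num.real) && (toC s < d).
  apply: (hermitian_rayleigh (x := map_mx toC x)) A_herm s_real _.
  have toC_entry (M : 'M[R]_1) : (map_mx toC M) 0 0 = toC (M 0 0) by rewrite mxE.
  by rewrite toC_adj -!map_mxM !toC_entry -rmorphM ltcR.
move=> d_eigen /andP[/complex_realP[t d_eq] s_lt_t]; exists t; last by rewrite -ltcR -d_eq.
by move: d_eigen; rewrite d_eq !eigenvalue_root_char -map_char_poly fmorph_root.
Qed.

End Rayleigh.

Section SpectralRadius.

Variables (R : realType) (n : nat) (e : rel 'I_n).

Lemma eigenvalue_le_spec_rad t : eigenvalue (adj_mx R e) t -> t <= spec_rad R e.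
Proof.
rewrite eigenvalue_root_char => t_root; apply: le_trans (ler_norm t) _.
have p_neq0 : char_poly (adj_mx R e) != 0 by rewrite monic_neq0 ?char_poly_monic.
have t_in : t \in rootsR (char_poly (adj_mx R e)) by rewrite -roots_on_rootsR ?t_root.
exact: (@le_bigmax_seq _ _ _ _ 0 t xpredT (fun x => `|x|) t_in isT).
Qed.

Lemma spec_rad_lt (c : R) : 0 < c ->
  (forall t, eigenvalue (adj_mx R e) t -> `|t| < c) -> spec_rad R e < c.
Proof.
move=> c_gt0 eigen_lt; rewrite /spec_rad big_seq_cond.
apply: bigmax_lt => // t /andP[t_in _]; apply: eigen_lt.
by rewrite eigenvalue_root_char; apply: root_roots t_in.
Qed.

Lemma spec_rad_lt_of_weight (w : 'I_n -> nat) (c : nat) : (0 < c)%N ->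
  (forall i, 0 < w i)%N -> (forall j, \sum_i w i * e i j < c * w j)%N ->
  spec_rad R e < c%:R.
Proof.
move=> c_gt0 w_gt0 wA_lt; apply: spec_rad_lt; first by rewrite ltr0n.
move=> t; apply: (@norm_eigenvalue_lt _ _ _ (\row_i (w i)%:R)) => [i j|j|j].
- by rewrite mxE ler0n.
- by rewrite mxE ltr0n.
have -> : (\row_i (w i)%:R *m adj_mx R e) 0 j = (\sum_i w i * e i j)%:R :> R.
  by rewrite mxE natr_sum; apply: eq_bigr => i _; rewrite !mxE natrM.
by rewrite mxE -natrM ltr_nat.
Qed.

Lemma spec_rad_gt_of_test_vector (x : 'I_n -> nat) (s : nat) :
  (forall i j, e i j = e j i) ->
  (s * \sum_j x j ^ 2 < \sum_j (\sum_i x i * e i j) * x j)%N -> s%:R < spec_rad R e.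
Proof.
move=> e_sym quad_gt; set xr := \row_j (x j)%:R : 'rV[R]_n.
have A_sym : (adj_mx R e)^T = adj_mx R e by apply/matrixP => i j; rewrite !mxE e_sym.
have norm_xr : (xr *m xr^T) 0 0 = (\sum_j x j ^ 2)%:R.
  by rewrite mxE natr_sum; apply: eq_bigr => j _; rewrite !mxE natrX.
have quad_xr : (xr *m adj_mx R e *m xr^T) 0 0 = (\sum_j (\sum_i x i * e i j) * x j)%:R.
  rewrite mxE natr_sum; apply: eq_bigr => j _; rewrite !mxE natrM natr_sum.
  by congr (_ * _); apply: eq_bigr => i _; rewrite !mxE natrM.
have [t t_eigen s_lt_t] : exists2 t, eigenvalue (adj_mx R e) t & s%:R < t.
  by apply: (sym_rayleigh (x := xr)) A_sym _; rewrite norm_xr quad_xr -natrM ltr_nat.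
exact: lt_le_trans s_lt_t (eigenvalue_le_spec_rad t_eigen).
Qed.

End SpectralRadius.

Local Close Scope ring_scope.

Section DegreeInSet.

Variables (n : nat) (e : rel 'I_n).
Hypotheses (e_sym : forall x y, e x y = e y x) (e_irr : forall x, ~~ e x x).

Definition deg_in (A : {set 'I_n}) (j : 'I_n) : nat := \sum_(i in A) e i j.

Lemma deg_in_mkcond (A : {set 'I_n}) j : deg_in A j = \sum_i ((i \in A) && e i j : nat).
Proof. by rewrite /deg_in big_mkcond; apply: eq_bigr => i _; case: (i \in A). Qed.

Lemma deg_inE (A : {set 'I_n}) j : deg_in A j = #|[set i in A | e i j]|.
Proof. by rewrite -sum1dep_card big_mkcondr. Qed.

Lemma deg_in_le (A S : {set 'I_n}) j :
  {in A, forall i, e i j -> i \in S} -> deg_in A j <= #|S|.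
Proof.
move=> A_sub; rewrite deg_inE; apply: subset_leq_card; apply/subsetP => i.
by rewrite inE => /andP[/A_sub]; apply.
Qed.

Lemma deg_in_clique (A : {set 'I_n}) j :
  {in A &, forall x y, x != y -> e x y} -> j \in A -> deg_in A j = #|A| - 1.
Proof.
move=> A_clique j_in; rewrite deg_inE (cardsD1 j A) j_in addKn.
apply: eq_card => i; rewrite !inE.
have [->|i_neq_j] := eqVneq i j; first by rewrite (negbTE (e_irr j)) andbF.
by apply: andb_idr => i_in; apply: A_clique.
Qed.

Lemma deg_in_setC_le_sum (B : {set 'I_n}) j : j \in B ->
  deg_in (~: B) j <= \sum_(i in ~: B) deg_in B i.
Proof.
move=> j_in; apply: leq_sum => i _; rewrite /deg_in (bigD1 j) //= e_sym.
exact: leq_addr.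
Qed.

Lemma sum_deg_in_setC_le_cut_edges (B : {set 'I_n}) :
  \sum_(i in ~: B) deg_in B i <=
  #|[set E in edges e | [exists x in E, x \in B] && [exists y in E, y \notin B]]|.
Proof.
pose S := [set u : 'I_n * 'I_n | (u.1 \notin B) && ((u.2 \in B) && e u.2 u.1)].
have -> : \sum_(i in ~: B) deg_in B i = #|S|.
  rewrite -sum1dep_card -(pair_big_dep (fun i => i \notin B)
    (fun i l => (l \in B) && e l i) (fun _ _ => 1)).
  by apply: eq_big => [i|i _]; rewrite ?inE // deg_inE sum1dep_card.
pose edge_of (u : 'I_n * 'I_n) := [set u.1; u.2].
rewrite -(@card_in_imset _ _ edge_of S); last first.
  move=> [i l] [i' l']; rewrite !inE /edge_of /=.
  move=> /andP[i_out /andP[l_in _]] /andP[i'_out /andP[l'_in _]] E_eq.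
  have : i \in [set i'; l'] by rewrite -E_eq !inE eqxx.
  rewrite !inE => /orP[/eqP i_i'|/eqP i_l']; last by rewrite i_l' l'_in in i_out.
  have : l \in [set i'; l'] by rewrite -E_eq !inE eqxx orbT.
  rewrite !inE => /orP[/eqP l_i'|/eqP ->]; last by rewrite i_i'.
  by rewrite -l_i' l_in in i'_out.
apply/subset_leq_card/subsetP => E /imsetP[[i l]].
rewrite inE /edge_of /= => /andP[i_out /andP[l_in e_li]] ->.
rewrite !inE; apply/and3P; split.
- by apply/existsP; exists i; apply/existsP; exists l; rewrite e_sym e_li eqxx.
- by apply/existsP; exists l; rewrite !inE eqxx orbT l_in.
- by apply/existsP; exists i; rewrite !inE eqxx i_out.
Qed.

End DegreeInSet.

Section SparseCut.

Variables (R : realType) (n : nat) (e : rel 'I_n) (B : {set 'I_n}) (lam h : nat).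
Hypotheses (e_sym : forall x y, e x y = e y x) (e_irr : forall x, ~~ e x x).
Hypothesis cut_le : \sum_(i in ~: B) deg_in e B i <= lam.
Hypothesis out_deg_le : forall j, j \notin B -> deg_in e (~: B) j <= h.

Lemma spec_rad_lt_sparse_cut :
  0 < lam -> 2 * lam < #|B| -> #|B| * h + 2 * lam ^ 2 < #|B| ^ 2 ->
  (spec_rad R e < #|B|%:R)%R.
Proof.
set N := #|B| => lam_gt0 lam_small h_small.
pose w i := if i \in B then 2 * lam * N else N + 2 * lam * deg_in e B i.
have col_le j : \sum_i w i * e i j <= 2 * lam * N * deg_in e B j
    + N * deg_in e (~: B) j + 2 * lam * \sum_(i in ~: B) deg_in e B i.
  rewrite !(deg_in_mkcond _ _ j) [\sum_(i in ~: B) _]big_mkcond.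
  rewrite !big_distrr -!big_split /=; apply: leq_sum => i _.
  by rewrite /w in_setC; case: (i \in B); case: (e i j) => /=; lia.
apply: (spec_rad_lt_of_weight R (w := w)) => [|i|j]; first by lia.
  by rewrite /w; case: ifP; lia.
apply: leq_ltn_trans (col_le j) _; rewrite /w; case: ifPn => j_in.
- have deg_B : deg_in e B j <= N - 1.
    rewrite /N (cardsD1 j B) j_in addKn; apply: deg_in_le => i i_in e_ij.
    by rewrite !inE i_in andbT; apply: contraTneq e_ij => ->.
  have deg_C := leq_trans (deg_in_setC_le_sum e_sym j_in) cut_le.
  apply: leq_ltn_trans (leq_add (leq_add (leq_mul (leqnn _) deg_B)
    (leq_mul (leqnn _) deg_C)) (leq_mul (leqnn _) cut_le)) _.
  nia.
- apply: leq_ltn_trans (leq_add (leq_add (leqnn _)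
    (leq_mul (leqnn _) (out_deg_le j_in))) (leq_mul (leqnn _) cut_le)) _.
  nia.
Qed.

End SparseCut.

Section CliqueLowerBound.

Variables (R : realType) (n : nat) (e : rel 'I_n) (B : {set 'I_n}) (a y : 'I_n).
Hypotheses (e_sym : forall x y, e x y = e y x) (e_irr : forall x, ~~ e x x).
Hypothesis B_clique : {in B &, forall x y, x != y -> e x y}.
Hypotheses (a_in : a \in B) (y_notin : y \notin B) (e_ay : e a y).

Lemma spec_rad_gt_clique : (#|B|%:R - 1 < spec_rad R e)%R.
Proof.
set N := #|B|; have N_gt0 : 0 < N by apply/card_gt0P; exists a.
pose x j := N * (j \in B) + (j == y).
have sum_x (f : 'I_n -> nat) : \sum_j f j * x j = N * \sum_(j in B) f j + f y.
  have sum_B : \sum_j f j * (j \in B) = \sum_(j in B) f j.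
    rewrite [RHS]big_mkcond; apply: eq_bigr => j _.
    by case: (j \in B); rewrite ?muln1 ?muln0.
  have sum_y : \sum_j f j * (j == y) = f y.
    by rewrite (bigD1 y) //= eqxx muln1 big1 ?addn0 // => j /negbTE ->; rewrite muln0.
  rewrite -sum_B -sum_y big_distrr -big_split; apply: eq_bigr => j _.
  by rewrite /x mulnDr mulnCA.
have col_x j : \sum_i x i * e i j = N * deg_in e B j + e y j.
  rewrite (eq_bigr (fun i => e i j * x i)) => [|i _]; last exact: mulnC.
  by rewrite sum_x.
have deg_y : 0 < deg_in e B y by rewrite (deg_in_mkcond _ _ y) (bigD1 a) //= a_in e_ay.
have deg_B j : j \in B -> deg_in e B j = N - 1 by apply: deg_in_clique.
have x_B j : j \in B -> x j = N.
  move=> j_in; rewrite /x j_in.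
  have -> : (j == y) = false by apply: contraNF y_notin => /eqP <-.
  by rewrite muln1 addn0.
have norm_x : \sum_j x j ^ 2 = N * (N * N) + 1.
  rewrite (eq_bigr (fun j => x j * x j)) => [|j _]; last by rewrite mulnn.
  have x_y : x y = 1 by rewrite /x eqxx (negbTE y_notin) muln0.
  rewrite sum_x x_y; under eq_bigr => j j_in do rewrite x_B //.
  by rewrite sum_nat_const.
have quad_x : \sum_j (\sum_i x i * e i j) * x j =
    N * (N * (N * (N - 1)) + deg_in e B y) + N * deg_in e B y.
  rewrite sum_x col_x (negbTE (e_irr y)) addn0.
  under eq_bigr => j j_in do rewrite col_x deg_B // e_sym.
  by rewrite big_split sum_nat_const.
rewrite -(natrB _ N_gt0); apply: (spec_rad_gt_of_test_vector R (x := x)) => //.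
rewrite norm_x quad_x; nia.
Qed.

End CliqueLowerBound.

Section FamilyOutDegree.

Variables (n r h : nat) (e : rel 'I_n) (p : 'I_n -> nat) (v : 'I_n).
Hypotheses (e_sym : forall x y, e x y = e y x) (e_irr : forall x, ~~ e x x).
Hypotheses (p_le : forall x, p x <= r) (r_ge2 : 2 <= r).
Hypothesis card_part : forall i, 1 <= i <= r - 2 -> #|[set x | p x == i]| = h + 1.
Hypothesis card_last : #|[set x | p x == r - 1]| = h.
Hypothesis part_r : [set x | p x == r] = [set v].
Hypothesis no_cross : forall x y, e x y -> 0 < p x -> 0 < p y -> p x != p y ->
  (p x == r - 1) && (p y == r) || (p x == r) && (p y == r - 1).

Lemma family_out_deg_le j : p j != 0 -> deg_in e (~: [set x | p x == 0]) j <= h.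
Proof.
move=> pj_neq0.
have cross i : e i j -> p i != 0 -> p i != p j ->
    (p j == r - 1) && (p i == r) || (p j == r) && (p i == r - 1).
  move=> e_ij pi_neq0 p_ij; apply: no_cross; rewrite ?lt0n //;
    by [rewrite e_sym | rewrite eq_sym].
have part_rE x : (p x == r) = (x == v) by move/setP: part_r => /(_ x); rewrite !inE.
have i_neq_j i : e i j -> i != j by apply: contraTneq => ->; apply: e_irr.
have card_part_j : #|[set x | p x == p j] :\ j| = #|[set x | p x == p j]| - 1.
  by rewrite [in RHS](cardsD1 j) inE eqxx addKn.
have pj_le := p_le j; case: (ltngtP (p j) (r - 1)) => [pj_lt|pj_gt|pj_eq].
- apply: leq_trans (deg_in_le (S := [set x | p x == p j] :\ j) _) _.
    move=> i; rewrite !inE => pi_neq0 e_ij; rewrite i_neq_j //=.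
    have [//|p_ij] := eqVneq (p i) (p j).
    by have := cross i e_ij pi_neq0 p_ij; lia.
  by rewrite card_part_j card_part //; lia.
- apply: leq_trans (deg_in_le (S := [set x | p x == r - 1]) _) _; last by rewrite card_last.
  move=> i; rewrite !inE => pi_neq0 e_ij.
  have pj_r : p j = r by lia.
  have p_ij : p i != p j.
    apply: contraNneq (i_neq_j i e_ij) => p_ij.
    have i_v : i == v by rewrite -part_rE p_ij pj_r.
    have j_v : j == v by rewrite -part_rE pj_r.
    by rewrite (eqP i_v) (eqP j_v).
  by have := cross i e_ij pi_neq0 p_ij; lia.
- apply: leq_trans (deg_in_le (S := ([set x | p x == p j] :\ j) :|: [set v]) _) _.
    move=> i; rewrite !inE => pi_neq0 e_ij; rewrite i_neq_j //=.
    have [//|p_ij] := eqVneq (p i) (p j).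
    by have := cross i e_ij pi_neq0 p_ij; rewrite -part_rE; lia.
  have h_gt0 : 0 < h by rewrite -card_last; apply/card_gt0P; exists j; rewrite inE pj_eq.
  apply: leq_trans (leq_card_setU _ _) _.
  by rewrite cards1 card_part_j pj_eq card_last; lia.
Qed.

End FamilyOutDegree.

Lemma big_clique_order_bounds lam h m n : 0 < h -> m <= lam ->
  (lam + 1) * (h + 1) ^ 2 <= n ->
  2 * lam < n - m * (h + 1) /\
  (n - m * (h + 1)) * h + 2 * lam ^ 2 < (n - m * (h + 1)) ^ 2.
Proof.
move=> h_gt0 m_le n_ge; set N := n - m * (h + 1).
have N_ge : (h + 1) * (lam * h + h + 1) <= N.
  by have := leq_mul m_le (leqnn (h + 1)); rewrite /N; nia.
have lam_lt : 2 * lam < N by nia.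
have lam_lt_N_sub_h : lam < N - h by nia.
by split=> //; nia.
Qed.

Local Open Scope ring_scope.

Theorem lemma3p3 (R : realType) (r delta n h lam : nat) (e : rel 'I_n) :
  (2 <= r)%N -> (0 < delta)%N -> (0 < h)%N ->
  ((lam + 1) * (h + 1) ^ 2 <= n)%N -> (r - 1 <= lam)%N -> (delta <= h)%N ->
  in_family_K delta r h lam e ->
  (n - (r - 1) * (h + 1))%:R - 1 < spec_rad R e /\
  spec_rad R e < (n - (r - 1) * (h + 1))%:R.
Proof.
move=> r_ge2 _ h_gt0 n_ge lam_ge _ [[e_irr e_sym] [_ [_ [p [a [v [t
  [p_le card_big card_part card_last [part_r [clique no_cross
  [/andP[_ t_le] _] [pa0 a_adj] cut_edges]]]]]]]]]].
set B := [set x | p x == 0%N]; rewrite -card_big.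
have [y [py1 e_ay]] : exists y, p y = 1%N /\ e a y by apply: a_adj; lia.
have [lam_small h_small] := big_clique_order_bounds h_gt0 lam_ge n_ge.
split.
  apply: (spec_rad_gt_clique R (a := a) (y := y)); rewrite ?inE ?pa0 ?py1 //.
  by move=> x z; rewrite !inE => /eqP px /eqP pz x_neq_z; apply: clique; rewrite ?px ?pz.
apply: (spec_rad_lt_sparse_cut R (lam := lam) (h := h)); rewrite ?card_big //.
- apply: leq_trans (sum_deg_in_setC_le_cut_edges e_sym B) _.
  have -> : [set E in edges e | [exists x in E, x \in B] && [exists y in E, y \notin B]] =
            [set E in edges e | [exists x in E, p x == 0%N] && [exists y in E, p y != 0%N]].
    by apply/setP => E; rewrite !inE; congr (_ && (_ && _)); apply: eq_existsb => x; rewrite inE.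
  by lia.
- move=> j; rewrite inE.
  exact: (family_out_deg_le e_sym e_irr p_le r_ge2 card_part card_last part_r no_cross).
- by lia.
Qed.
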